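(* Let $I$ be a conditional indicator w.r.t. $\mathcal{H}$ whose domain $\mathbb{D}_I$ is $\mathcal{H}$-decomposable. If $I$ is sub-additive, then $1_HI(X)\le I(1_HX)$ for all $H\in\mathcal{H}$ and $X\in\mathbb{D}_I$. Moreover, if $I$ is additive, then $I$ is regular.
   Context: Let $(\Omega,\mathcal{F},\mathbb{P})$ be a probability space with $\mathcal{F}$ complete, and $\mathcal{H}\subseteq\mathcal{F}$ a complete sub-$\sigma$-algebra. $\overline{\mathbb{R}}=\mathbb{R}\cup\{\pm\infty\}$ with conventions $r\pm\infty=\pm\infty$, $\infty-\infty=0$, $\infty+\infty=\infty$, $0\times(\pm\infty)=0$; $\mathbb{L}^0(G,\mathcal{G})$ is the set of $\mathcal{G}$-measurable random variables a.s. valued in $G$. $\operatorname{ess\,sup}_{\mathcal{H}}(X)$ is the smallest $\mathcal{H}$-measurable random variable dominating $X$ a.s., $\operatorname{ess\,inf}_{\mathcal{H}}(X)=-\operatorname{ess\,sup}_{\mathcal{H}}(-X)$. A conditional indicator w.r.t. $\mathcal{H}$ is a map $I:\mathbb{D}_I\to\mathbb{L}^0(\overline{\mathbb{R}},\mathcal{H})$, $0\in\mathbb{D}_I\subseteq\mathbb{L}^0(\overline{\mathbb{R}},\mathcal{F})$, with $I(X)\in[\operatorname{ess\,inf}_{\mathcal{H}}(X),\operatorname{ess\,sup}_{\mathcal{H}}(X)]$ a.s. and $\mathbb{D}_I+\mathbb{L}^0(\overline{\mathbb{R}},\mathcal{H})\subseteq\mathbb{D}_I$. $\mathbb{D}_I$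 is $\mathcal{H}$-decomposable if $X1_H+Y1_{\Omega\setminus H}\in\mathbb{D}_I$ for $X,Y\in\mathbb{D}_I$, $H\in\mathcal{H}$. Sub-additive: $I(X+Y)\le I(X)+I(Y)$; additive: equality. $I$ is regular if $\mathbb{D}_I$ is $\mathcal{H}$-decomposable and for $X,Y\in\mathbb{D}_I$, $H\in\mathcal{H}$, $X1_H=Y1_H$ implies $I(X)1_H=I(Y)1_H$. *)

From HB Require Import structures.
From mathcomp Require Import all_boot all_order all_algebra.
From mathcomp Require Import all_classical all_reals all_analysis measurable_realfun.
Set Implicit Arguments. Unset Strict Implicit. Unset Printing Implicit Defensive.
Import Order.TTheory GRing.Theory Num.Theory.
Local Open Scope classical_set_scope.
Local Open Scope ring_scope.
Local Open Scope ereal_scope.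

(** Addition on extended reals with the paper's convention
    r +- oo = +-oo, +oo + +oo = +oo, -oo + -oo = -oo, and +oo - oo = 0
    (MathComp's [adde] sets +oo + -oo = -oo instead). *)
Definition addx {R : realType} (x y : \bar R) : \bar R :=
  match x, y with
  | +oo, -oo => 0
  | -oo, +oo => 0
  | _, _ => x + y
  end.

Definition addrv {T} {R : realType} (X Y : T -> \bar R) : T -> \bar R :=
  fun w => addx (X w) (Y w).

(** 1_A X  (with 0 * (+-oo) = 0, as in MathComp's [mule]) *)
Definition indmul {T} {R : realType} (A : set T) (X : T -> \bar R) : T -> \bar R :=
  fun w => (\1_A w)%:E * X w.

Section defs.
Context d (T : measurableType d) (R : realType) (P : probability T R).

Definition F_complete : Prop :=
  forall N : set T, P.-negligible N -> measurable N.

Definition complete_sub_sigma (H : set (set T)) : Prop :=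
  [/\ sigma_algebra setT H, (forall A, H A -> measurable A)
    & (forall N : set T, P.-negligible N -> H N)].

Definition Fmeas (X : T -> \bar R) : Prop := measurable_fun setT X.

Definition Hmeas (H : set (set T)) (X : T -> \bar R) : Prop :=
  forall B : set (\bar R), measurable B -> H (X @^-1` B).

Definition is_esssupH (H : set (set T)) (X Z : T -> \bar R) : Prop :=
  [/\ Hmeas H Z, {ae P, forall w, X w <= Z w}
    & forall Z', Hmeas H Z' -> {ae P, forall w, X w <= Z' w} ->
         {ae P, forall w, Z w <= Z' w}].

Definition is_essinfH (H : set (set T)) (X Z : T -> \bar R) : Prop :=
  is_esssupH H (fun w => - X w) (fun w => - Z w).

(** Random variables are
    represented by functions; since the paper works on L^0 (a.s. classes),
    D is required to be closed under a.s. equality and I to be compatible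
    with it (I is a well-defined map on classes). *)
Definition cond_indicator (H : set (set T)) (D : set (T -> \bar R))
    (I : (T -> \bar R) -> (T -> \bar R)) : Prop :=
  D (fun=> 0) /\
  [/\ (forall X, D X -> Fmeas X),
      (forall X Y, D X -> Fmeas Y -> {ae P, forall w, X w = Y w} ->
          D Y /\ {ae P, forall w, I X w = I Y w}),
      (forall X, D X -> Hmeas H (I X)),
      (forall X, D X ->
          (forall Z, is_esssupH H X Z -> {ae P, forall w, I X w <= Z w}) /\
          (forall Z, is_essinfH H X Z -> {ae P, forall w, Z w <= I X w}))
    & (forall X Y, D X -> Hmeas H Y -> D (addrv X Y))].

Definition ci_decomposable (H : set (set T)) (D : set (T -> \bar R)) : Prop :=
  forall X Y A, D X -> D Y -> H A -> D (addrv (indmul A X) (indmul (~` A) Y)).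

Definition ci_subadditive (D : set (T -> \bar R))
    (I : (T -> \bar R) -> (T -> \bar R)) : Prop :=
  forall X Y, D X -> D Y -> D (addrv X Y) ->
    {ae P, forall w, I (addrv X Y) w <= addx (I X w) (I Y w)}.

Definition ci_additive (D : set (T -> \bar R))
    (I : (T -> \bar R) -> (T -> \bar R)) : Prop :=
  forall X Y, D X -> D Y -> D (addrv X Y) ->
    {ae P, forall w, I (addrv X Y) w = addx (I X w) (I Y w)}.

Definition ci_regular (H : set (set T)) (D : set (T -> \bar R))
    (I : (T -> \bar R) -> (T -> \bar R)) : Prop :=
  ci_decomposable H D /\
  forall X Y A, D X -> D Y -> H A ->
    {ae P, forall w, indmul A X w = indmul A Y w} ->
    {ae P, forall w, indmul A (I X) w = indmul A (I Y) w}.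

End defs.

From HB Require Import structures.
From mathcomp Require Import all_boot all_order all_algebra.
From mathcomp Require Import all_classical all_reals all_analysis measurable_realfun.
Set Implicit Arguments.
Unset Strict Implicit.
Unset Printing Implicit Defensive.
Import Order.TTheory GRing.Theory Num.Theory.
Local Open Scope classical_set_scope.
Local Open Scope ereal_scope.

(** If [A] is in [H] and [X] vanishes on [A], then [X] is squeezed between the
    H-measurable bounds [-oo * 1_(~A)] and [+oo * 1_(~A)], so [I X], which lies
    between the conditional essential infimum and supremum of [X], vanishes a.s.
    on [A].  Splitting [X = 1_A X + 1_(~A) X], sub-additivity then gives
    [I X <= I (1_A X)] on [A], while [I (1_A X) = 0] off [A]; under additivity
    the inequality on [A] becomes an equality, which is regularity.
    Conditional essential suprema exist because [H] is complete: [Y] has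
    ess sup_H given by [inf_q (q on ~B_q, +oo on B_q)], where [q] ranges over
    the rationals and [B_q] is an H-measurable hull of [{q < Y}]. *)

Lemma lee_rat_dense (R : realType) (x y : \bar R) :
  (forall q : rat, y < (ratr q)%:E -> x <= (ratr q)%:E) -> x <= y.
Proof.
case: y => [r| |] xq; last first.
- suff -> : x = -oo by [].
  apply: eq_ninfty => r.
  have [q] : exists q : rat, ratr q \in `](r - 1), r[%R by apply: rat_in_itvoo; rewrite gtrBl.
  rewrite in_itv /= => /andP[_ qr].
  by apply: le_trans (xq q (ltNyr _)) _; rewrite lee_fin ltW.
- exact: leey.
- apply/lee_addgt0Pr => e e0.
  have [q] : exists q : rat, ratr q \in `]r, r + e[%R by apply: rat_in_itvoo; rewrite ltrDl.
  rewrite in_itv /= => /andP[rq qre].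
  by apply: le_trans (xq q _) _; rewrite ?lte_fin -?EFinD ?lee_fin ?ltW.
Qed.

Section indmul.
Context (T : Type) (R : realType).
Implicit Types (A : set T) (X : T -> \bar R).

Lemma indmul_mem A X w : A w -> indmul A X w = X w.
Proof. by move=> Aw; rewrite /indmul indicE mem_set // mul1e. Qed.

Lemma indmul_notin A X w : ~ A w -> indmul A X w = 0.
Proof. by move=> Aw; rewrite /indmul indicE memNset // mul0e. Qed.

Lemma addx0 (x : \bar R) : addx x 0 = x.
Proof. by case: x => [r| |] //=; rewrite adde0. Qed.

Lemma add0x (x : \bar R) : addx 0 x = x.
Proof. by case: x => [r| |] //=; rewrite add0e. Qed.

Lemma addrv_indmulC A X : addrv (indmul A X) (indmul (~` A) X) = X.
Proof.
apply/funext => w; rewrite /addrv; have [Aw|Aw] := pselect (A w).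
  by rewrite indmul_mem // indmul_notin ?addx0.
by rewrite indmul_notin // add0x indmul_mem.
Qed.

Lemma addrv_indmul0 A X : addrv (indmul A X) (indmul (~` A) (fun=> 0)) = indmul A X.
Proof. by apply/funext => w; rewrite /addrv /indmul mule0 addx0. Qed.

End indmul.

Section sub_sigma_algebra.
Context d (T : measurableType d) (R : realType) (P : probability T R).
Variable H : set (set T).
Hypothesis cH : complete_sub_sigma P H.

Let sH : sigma_algebra setT H. Proof. by case: cH. Qed.
Let HF A : H A -> measurable A. Proof. by case: cH => _ + _; apply. Qed.
Let Hnegligible N : P.-negligible N -> H N. Proof. by case: cH => _ _; apply. Qed.
Let HE : H.-sigma.-measurable = H. Proof. exact: measurable_g_measurableTypeE. Qed.

Lemma complete_sub_sigmaC A : H A -> H (~` A).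
Proof. by rewrite -HE; exact: measurableC. Qed.

Lemma Hmeas_measurable (f : T -> \bar R) :
  Hmeas H f <-> measurable_fun (setT : set (g_sigma_algebraType H)) f.
Proof.
split=> [hf _ B mB|hf B mB]; first by rewrite setTI HE; exact: hf.
by rewrite -HE -[_ @^-1` _]setTI; exact: hf.
Qed.

Lemma Hmeas_ifasbool A (a b : \bar R) :
  H A -> Hmeas H (fun w => if `[< A w >] then a else b).
Proof.
move=> HA B mB; rewrite -HE.
have -> : (fun w => if `[< A w >] then a else b) @^-1` B =
    (A `&` cst a @^-1` B) `|` (~` A `&` cst b @^-1` B).
  by apply/seteqP; split=> w /=; case: asboolP => Aw; [left|right|case=> -[]..].
have mcst (c : \bar R) : H.-sigma.-measurable (cst c @^-1` B).
  by rewrite -[_ @^-1` _]setTI; exact: measurable_cst.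
by apply: measurableU; apply: measurableI => //; [rewrite HE|apply: measurableC; rewrite HE].
Qed.

Definition is_Hhull (S B : set T) :=
  [/\ H B, S `<=` B & forall B', H B' -> S `<=` B' -> P (B `\` B') = 0].

Lemma Hhull_exists S : exists B, is_Hhull S B.
Proof.
pose m := ereal_inf [set P B | B in [set B | H B /\ S `<=` B]].
have m_le B : H B -> S `<=` B -> m <= P B.
  by move=> HB SB; apply: ereal_inf_lbound; exists B.
have m_fin : m \is a fin_num.
  rewrite ge0_fin_numE; last by apply: le_ereal_inf_tmp => _ [B _ <-].
  by rewrite (le_lt_trans (m_le setT _ _)) ?probability_setT ?ltry // -HE.
have /choice[Bn Bn_min] : forall n : nat,
    exists B, (H B /\ S `<=` B) /\ P B < m + (n.+1%:R^-1)%:E.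
  move=> n; have : m < m + (n.+1%:R^-1)%:E by rewrite lteDl.
  by move/ereal_inf_lt => [_ [B HB <-] PB]; exists B.
pose B := \bigcap_n Bn n.
have HB : H B.
  by rewrite -HE; apply: bigcapT_measurable => n; rewrite HE; case: (Bn_min n) => -[].
have SB : S `<=` B by move=> w Sw n _; case: (Bn_min n) => -[_ +] _; apply.
have PB_le : P B <= m.
  apply/lee_addgt0Pr => e e0.
  have [n _ /(_ n (leqnn n)) ne] := near_infty_natSinv_lt (PosNum e0).
  case: (Bn_min n) => -[HBn _] PBn.
  apply: (@le_trans _ _ (P (Bn n))).
    by apply: le_measure; rewrite ?inE; [exact: HF|exact: HF|exact: bigcap_inf].
  by apply/ltW/(lt_le_trans PBn); rewrite leeD2l // lee_fin ltW.
exists B; split=> // B' HB' SB'.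
have HBB' : H (B `&` B') by rewrite -HE; apply: measurableI; rewrite HE.
have PBB'_fin : P (B `&` B') \is a fin_num by rewrite fin_num_measure //; exact: HF.
apply/eqP; rewrite eq_le measure_ge0 andbT -(leeD2rE _ _ PBB'_fin) add0e.
rewrite -measureDI; [|exact: HF|exact: HF].
by apply: le_trans PB_le (m_le _ _ _) => // w Sw; split; [exact: SB|exact: SB'].
Qed.

Section esssupH_construction.
Variables (Y : T -> \bar R) (q : nat -> rat).
Hypothesis q_surj : forall r, exists k, q k = r.
Variable B : nat -> set T.
Hypothesis B_hull : forall k, is_Hhull [set w | (ratr (q k))%:E < Y w] (B k).

Let f k w : \bar R := if `[< B k w >] then +oo else (ratr (q k))%:E.
Let Z w := einfs (f^~ w) 0%N.

Let Hmeas_Z : Hmeas H Z.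
Proof.
apply/Hmeas_measurable; apply: measurable_fun_einfs => k.
by apply/Hmeas_measurable/Hmeas_ifasbool; case: (B_hull k).
Qed.

Let Y_le_Z w : Y w <= Z w.
Proof.
apply: le_ereal_inf_tmp => _ [k _ <-]; rewrite /f; case: asboolP => [_|Bw].
  exact: leey.
by rewrite leNgt; apply/negP => qY; apply: Bw; case: (B_hull k) => _ + _; apply.
Qed.

Let Z_le_Hmeas Z' : Hmeas H Z' -> {ae P, forall w, Y w <= Z' w} ->
  {ae P, forall w, Z w <= Z' w}.
Proof.
move=> HZ' YZ'.
have [N [mN PN0 NN]] : P.-negligible (~` [set w | Y w <= Z' w]) := YZ'.
have HN : H N by apply: Hnegligible; exists N; split.
pose C k := [set w | (ratr (q k))%:E < Z' w] `|` N.
have HC k : H (C k).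
  rewrite -HE; apply: measurableU; last by rewrite HE.
  rewrite HE (_ : [set w | _ < Z' w] = Z' @^-1` `](ratr (q k))%:E, +oo[).
    exact/HZ'/emeasurable_itv.
  by apply/seteqP; split=> w /=; rewrite in_itv /= andbT.
have SC k : [set w | (ratr (q k))%:E < Y w] `<=` C k.
  move=> w qY; have [Nw|Nw] := pselect (N w); [by right|left].
  by apply: lt_le_trans qY _; apply: contrapT => notYZ'; apply/Nw/NN.
apply: (@negligibleS _ _ _ P (N `|` \bigcup_k (B k `\` C k))).
  move=> w /= Z'Z; apply: contrapT => good; apply/Z'Z/lee_rat_dense => r Z'r.
  have [k qk_r] := q_surj r; subst r.
  apply: le_trans (ereal_inf_lbound _) _; first by exists k.
  rewrite /f; case: asboolP => // Bw; exfalso; apply: good.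
  have [[qZ'|Nw]|nCw] := pselect (C k w); last by right; exists k.
  - by move: (lt_trans Z'r qZ'); rewrite ltxx.
  - by left.
apply: negligibleU; first by exists N; split.
apply: negligible_bigcup => k; exists (B k `\` C k); split=> //.
- by apply: measurableD; apply: HF; [case: (B_hull k)|exact: HC].
- by case: (B_hull k) => _ _; apply.
Qed.

Lemma esssupH_einfs_hull : is_esssupH P H Y Z.
Proof. by split=> //; exact: aeW. Qed.

End esssupH_construction.

Lemma esssupH_exists (Y : T -> \bar R) : exists Z, is_esssupH P H Y Z.
Proof.
pose q k : rat := odflt 0%R (unpickle k).
have q_surj r : exists k, q k = r by exists (pickle r); rewrite /q pickleK.
have /choice[B B_hull] k := Hhull_exists [set w | (ratr (q k))%:E < Y w].
by eexists; exact: (@esssupH_einfs_hull Y q q_surj B B_hull).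
Qed.

End sub_sigma_algebra.

Section conditional_indicator.
Context d (T : measurableType d) (R : realType) (P : probability T R).
Variables (H : set (set T)) (D : set (T -> \bar R)).
Variable I : (T -> \bar R) -> T -> \bar R.
Hypotheses (cH : complete_sub_sigma P H) (ciI : cond_indicator P H D I).

Lemma cond_indicator_le X G : D X -> Hmeas H G -> (forall w, X w <= G w) ->
  {ae P, forall w, I X w <= G w}.
Proof.
move=> DX HG XG; case: ciI => _ [_ _ _ /(_ X DX)[IX_le _] _].
have [Z supZ] := esssupH_exists cH X; have [_ _ Z_min] := supZ.
by apply: filterS2 _ _ (IX_le Z supZ) (Z_min G HG (aeW _ XG)) => w; exact: le_trans.
Qed.

Lemma cond_indicator_ge X G : D X -> Hmeas H G -> (forall w, G w <= X w) ->
  {ae P, forall w, G w <= I X w}.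
Proof.
move=> DX HG GX; case: ciI => _ [_ _ _ /(_ X DX)[_ IX_ge] _].
have [Z supZ] := esssupH_exists cH (fun w => - X w); have [_ _ Z_min] := supZ.
have infX : is_essinfH P H X (fun w => - Z w).
  by rewrite /is_essinfH (_ : (fun w => - - Z w) = Z) //; apply/funext => w; exact: oppeK.
have HNG : Hmeas H (fun w => - G w).
  by apply/(Hmeas_measurable cH)/measurableT_comp => //; exact/(Hmeas_measurable cH).
have Z_le := Z_min _ HNG (aeW _ (fun w => eqbRL (leeN2 _ _) (GX w))).
apply: filterS2 _ _ (IX_ge _ infX) Z_le => w NZ_le.
by rewrite leeNr => /le_trans; apply.
Qed.

Lemma cond_indicator_eq0 Y A : D Y -> H A -> (forall w, A w -> Y w = 0) ->
  {ae P, forall w, A w -> I Y w = 0}.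
Proof.
move=> DY HA Y0.
pose G c w : \bar R := if `[< A w >] then 0 else c.
have Y_le w : Y w <= G +oo w by rewrite /G; case: asboolP => [/Y0->|_]; rewrite ?leey.
have Y_ge w : G -oo w <= Y w by rewrite /G; case: asboolP => [/Y0->|_]; rewrite ?leNye.
apply: filterS2 _ _ (cond_indicator_le DY (Hmeas_ifasbool cH _ _ HA) Y_le)
  (cond_indicator_ge DY (Hmeas_ifasbool cH _ _ HA) Y_ge) => w.
by rewrite /G; case: asboolP => // _ IY_le IY_ge _; apply: le_anti; rewrite IY_le IY_ge.
Qed.

Hypothesis decD : ci_decomposable H D.

Lemma decomposable_indmul A X : H A -> D X -> D (indmul A X).
Proof. by move=> HA DX; rewrite -(addrv_indmul0 A X); apply: decD => //; case: ciI. Qed.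

Lemma cond_indicator_indmulC A X : H A -> D X ->
  {ae P, forall w, A w -> I (indmul (~` A) X) w = 0}.
Proof.
move=> HA DX; apply: cond_indicator_eq0 => //.
  exact: decomposable_indmul (complete_sub_sigmaC cH HA) DX.
by move=> w Aw; apply: indmul_notin => /(_ Aw).
Qed.

Lemma subadditive_le_indmul A X : ci_subadditive P D I -> H A -> D X ->
  {ae P, forall w, A w -> I X w <= I (indmul A X) w}.
Proof.
move=> subI HA DX.
have := subI _ _ (decomposable_indmul HA DX)
  (decomposable_indmul (complete_sub_sigmaC cH HA) DX).
rewrite addrv_indmulC => /(_ DX) IX_le.
apply: filterS2 _ _ IX_le (cond_indicator_indmulC HA DX) => w + /[apply].
by move=> + IAcX0; rewrite IAcX0 addx0.
Qed.

Lemma additive_eq_indmul A X : ci_additive P D I -> H A -> D X ->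
  {ae P, forall w, A w -> I X w = I (indmul A X) w}.
Proof.
move=> addI HA DX.
have := addI _ _ (decomposable_indmul HA DX)
  (decomposable_indmul (complete_sub_sigmaC cH HA) DX).
rewrite addrv_indmulC => /(_ DX) IX_eq.
apply: filterS2 _ _ IX_eq (cond_indicator_indmulC HA DX) => w + /[apply].
by move=> + IAcX0; rewrite IAcX0 addx0.
Qed.

End conditional_indicator.

Theorem mainTheorem16 (d : measure_display) (T : measurableType d) (R : realType)
  (P : probability T R) (H : set (set T)) (D : set (T -> \bar R))
  (I : (T -> \bar R) -> (T -> \bar R)) :
  F_complete P -> complete_sub_sigma P H ->
  cond_indicator P H D I -> ci_decomposable H D ->
  (ci_subadditive P D I ->
     forall A X, H A -> D X ->
       {ae P, forall w, indmul A (I X) w <= I (indmul A X) w}) /\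
  (ci_additive P D I -> ci_regular P H D I).
Proof.
move=> _ cH ciI decD; split=> [subI A X HA DX|addI].
  have DAX := decomposable_indmul ciI decD HA DX.
  have IAX0 := cond_indicator_eq0 cH ciI DAX (complete_sub_sigmaC cH HA)
    (fun w => @indmul_notin _ _ A X w).
  apply: filterS2 _ _ (subadditive_le_indmul cH ciI decD subI HA DX) IAX0 => w.
  have [Aw IX_le _|nAw _ /(_ nAw)->] := pselect (A w); last by rewrite indmul_notin.
  by rewrite indmul_mem // IX_le.
split=> // X Y A DX DY HA XY_A.
have [_ [DF Dae _ _ _]] := ciI.
have DAX := decomposable_indmul ciI decD HA DX.
have DAY := decomposable_indmul ciI decD HA DY.
have [_ IAX_IAY] := Dae _ _ DAX (DF _ DAY) XY_A.
apply: filterS3 _ _ (additive_eq_indmul cH ciI decD addI HA DX) IAX_IAY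
  (additive_eq_indmul cH ciI decD addI HA DY) => w IX_eq IAX_eq IY_eq.
have [Aw|nAw] := pselect (A w); last by rewrite !indmul_notin.
by rewrite !indmul_mem // IX_eq // IY_eq // IAX_eq.
Qed.
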